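(* Assume the setting in the context, and let $\mathbf d^*$ be any $\Phi_{\mathfrak B}$-optimal design with $\boldsymbol\Sigma^*=\mathbf M(\mathbf d^* )^{-1}=(c^*_{jk})$. Then for all $j,k\in\{1,\dots,m\}$: $$|c^*_{jk}|\le \alpha K\big[(\mathbf B\mathbf B')^{-1}_{jj}(\mathbf B\mathbf B')^{-1}_{kk}\big]^{1/2},$$ $$|c^*_{jk}|\le \alpha\big[\mathbf N^+_{jj}(\mathbf w^{(j+)})\,\mathbf N^+_{kk}(\mathbf w^{(k+)})\big]^{1/2},$$ $$|c^*_{jk}|\le \alpha\big[\mathbf N^+_{jj}(\mathbf w^{(j* )})\,\mathbf N^+_{kk}(\mathbf w^{(k* )})\big]^{1/2},$$ where $\mathbf A_{ij}$ denotes the $(i,j)$ entry of a matrix $\mathbf A$.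
   Context: Let $n,m,N,K$ be positive integers with $2\le m\le N\le n$, and let $\mathbf f_1,\dots,\mathbf f_n\in\mathbb R^m$ span $\mathbb R^m$. A (binary) design is $\mathbf d\in\{0,1\}^n$ with $\sum_i d_i=N$; its information matrix is $\mathbf M(\mathbf d)=\sum_{i=1}^n d_i\mathbf f_i\mathbf f_i'$. For $\ell\in\{1,\dots,K\}$ let $\mathbf B_\ell$ be a real $m\times s_\ell$ matrix, $\mathbf B=(\mathbf B_1,\dots,\mathbf B_K)$, with column space of $\mathbf B$ equal to $\mathbb R^m$ and no zero column. For positive definite $\mathbf M$, $\Phi_{\mathfrak B}(\mathbf M)=\max_{\ell}\mathrm{tr}(\mathbf B_\ell'\mathbf M^{-1}\mathbf B_\ell)$. A $\Phi_{\mathfrak B}$-optimal design minimizes $\Phi_{\mathfrak B}(\mathbf M(\mathbf d))$ over designs $\mathbf d$ with nonsingular $\mathbf M(\mathbf d)$. Let $\mathbf d_0$ be a design with nonsingular $\mathbf M(\mathbf d_0)$ and $\alpha=\Phi_{\mathfrak B}(\mathbf M(\mathbf d_0))$. For $\mathbf w\in\mathbb R^K$, $\mathbf w\ge 0$, $\sum w_\ell=1$, let $\mathbf N(\mathbf w)=\sum_\ell w_\ell\mathbf B_\ell\mathbf B_\ell'$; $\mathbf A^+$ is the Moore–Penrose pseudoinverse and $\mathbf e_j$ the $j$-th unit vector. For $j\in\{1,\dots,m\}$: write $\mathbf B^+\mathbf e_j=((\mathbf h^{(j+)}_1)',\dots,(\mathbf h^{(j+)}_K)')'$ with $\mathbf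 h^{(j+)}_\ell\in\mathbb R^{s_\ell}$, and set $w^{(j+)}_\ell=\|\mathbf h^{(j+)}_\ell\|/\sum_{t}\|\mathbf h^{(j+)}_t\|$; $\mathbf w^{(j* )}$ is a minimizer of $\mathbf e_j'\mathbf N^+(\mathbf w)\mathbf e_j$ over all such $\mathbf w$ with $\mathbf e_j\in\mathcal C(\mathbf N(\mathbf w))$. *)

From HB Require Import structures.
From mathcomp Require Import all_boot all_order all_algebra.
From Stdlib Require Import ClassicalEpsilon.
Set Implicit Arguments. Unset Strict Implicit. Unset Printing Implicit Defensive.
Import Order.TTheory GRing.Theory Num.Theory.
Local Open Scope ring_scope.

Section Defs.
Variable R : rcfType.

Definition is_MP_inverse p q (A : 'M[R]_(p, q)) (X : 'M[R]_(q, p)) : Prop :=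
  [/\ A *m X *m A = A, X *m A *m X = X,
      (A *m X)^T = A *m X & (X *m A)^T = X *m A].

(* The Moore-Penrose pseudoinverse A^+ (chosen by classical choice among
   the matrices satisfying the four Penrose conditions; it exists and is
   unique). *)
Definition mpinv p q (A : 'M[R]_(p, q)) : 'M[R]_(q, p) :=
  epsilon (inhabits 0) (fun X => is_MP_inverse A X).

Definition vnorm p (v : 'cV[R]_p) : R := Num.sqrt (\sum_i v i 0 ^+ 2).

Definition unitv m (j : 'I_m) : 'cV[R]_m := \col_i (i == j)%:R.

Definition info_mx n m (f : 'I_n -> 'cV[R]_m) (d : 'I_n -> bool) : 'M[R]_m :=
  \sum_(i < n | d i) f i *m (f i)^T.

Definition is_design n (N : nat) (d : 'I_n -> bool) : Prop :=
  (\sum_(i < n) (d i : nat))%N = N.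

(* Phi_B(M) = max_l tr(B_l' M^{-1} B_l); for positive definite M all traces
   are >= 0, so folding max from 0 gives the maximum over l (K >= 1). *)
Definition PhiB m K (s : 'I_K -> nat) (B_ : forall l, 'M[R]_(m, s l))
  (M : 'M[R]_m) : R :=
  \big[Num.max/0]_(l < K) \tr ((B_ l)^T *m invmx M *m B_ l).

Definition Nw m K (s : 'I_K -> nat) (B_ : forall l, 'M[R]_(m, s l))
  (w : 'I_K -> R) : 'M[R]_m :=
  \sum_(l < K) w l *: (B_ l *m (B_ l)^T).

Definition Bfull m K (s : 'I_K -> nat) (B_ : forall l, 'M[R]_(m, s l))
  : 'M[R]_(m, \sum_l s l) := mxrow B_.

Definition in_simplex K (w : 'I_K -> R) : Prop :=
  (forall l, 0 <= w l) /\ \sum_(l < K) w l = 1.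

Definition wplus m K (s : 'I_K -> nat) (B_ : forall l, 'M[R]_(m, s l))
  (j : 'I_m) : 'I_K -> R :=
  let h := mpinv (Bfull B_) *m unitv j in
  fun l => vnorm (submxcol h l) / \sum_(t < K) vnorm (submxcol h t).

End Defs.
Arguments unitv {R m} j.

From HB Require Import structures.
From mathcomp Require Import all_boot all_order all_algebra.
From mathcomp Require Import ring.
From Stdlib Require Import ClassicalEpsilon.
Set Implicit Arguments. Unset Strict Implicit. Unset Printing Implicit Defensive.
Import Order.TTheory GRing.Theory Num.Theory.
Local Open Scope ring_scope.

(* Write Sigma = M(d_opt)^-1 as a Gram matrix G'G.  For weights w in the
   simplex, N(w) = C C' with C = (sqrt w_l B_l)_l, and whenever N(w) X fixes
   e_i, the vector v = C' X e_i satisfies e_i = C v and v'v = X_ii.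
   Cauchy-Schwarz then gives
   Sigma_ii = |G C v|^2 <= tr(C' Sigma C) |v|^2 = (sum_l w_l tr(B_l' Sigma B_l)) X_ii,
   and optimality bounds every tr(B_l' Sigma B_l) by alpha.  The choices
   X = K (BB')^-1 and X = N(w)^+ (for w = w+ and w = w_opt; then N X C = C by
   the Penrose conditions, and e_i lies in the column space of C) bound the
   diagonal of Sigma, and |Sigma_jk| <= sqrt(Sigma_jj Sigma_kk) does the rest. *)

Section Euclidean.
Variable R : rcfType.

Lemma sum_sqr_eq0 (I : finType) (a : I -> R) :
  \sum_i a i ^+ 2 = 0 -> forall i, a i = 0.
Proof.
move=> a0 i; apply/eqP; rewrite -sqrf_eq0; apply/eqP.
by apply: (psumr_eq0P _ a0) => // k _; exact: sqr_ge0.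
Qed.

Lemma mulmx_trmx_eq0 p q (A : 'M[R]_(p, q)) : A *m A^T = 0 -> A = 0.
Proof.
move=> AAT0; apply/matrixP => i k; rewrite mxE.
have /matrixP /(_ i i) := AAT0; rewrite !mxE => AAT0ii.
apply: (@sum_sqr_eq0 _ (fun k => A i k)); rewrite -[RHS]AAT0ii.
by apply: eq_bigr => l _; rewrite mxE expr2.
Qed.

Lemma row_free_mulmx_trmx_unit p q (A : 'M[R]_(p, q)) :
  row_free A -> A *m A^T \in unitmx.
Proof.
move=> freeA; rewrite -row_free_unit -kermx_eq0; apply/rowV0P => v /sub_kermxP vAAT0.
have vA0 : (v *m A) *m (v *m A)^T = 0.
  by rewrite trmx_mul mulmxA -(mulmxA v) vAAT0 mul0mx.
by apply: (row_free_inj freeA); rewrite (mulmx_trmx_eq0 vA0) mul0mx.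
Qed.

Lemma sum_mul_sqr_le (I : finType) (a b : I -> R) :
  (\sum_i a i * b i) ^+ 2 <= (\sum_i a i ^+ 2) * (\sum_i b i ^+ 2).
Proof.
have sum_mul (f g : I -> R) : \sum_i \sum_j f i * g j = (\sum_i f i) * (\sum_j g j).
  by rewrite mulr_suml; apply: eq_bigr => i _; rewrite mulr_sumr.
have lagrange : \sum_i \sum_j (a i * b j - a j * b i) ^+ 2 =
    2 * ((\sum_i a i ^+ 2) * (\sum_i b i ^+ 2) - (\sum_i a i * b i) ^+ 2).
  have expand i j : (a i * b j - a j * b i) ^+ 2 =
      a i ^+ 2 * b j ^+ 2 + b i ^+ 2 * a j ^+ 2 - 2 * ((a i * b i) * (a j * b j)).
    by ring.
  under eq_bigr do under eq_bigr do rewrite expand.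
  under eq_bigr do rewrite sumrB big_split /=.
  rewrite sumrB big_split /= !sum_mul (mulrC (\sum_i b i ^+ 2)).
  under [X in _ - X = _]eq_bigr do rewrite -mulr_sumr.
  by rewrite -mulr_sumr sum_mul expr2; ring.
have : 0 <= \sum_i \sum_j (a i * b j - a j * b i) ^+ 2.
  by do 2![apply: sumr_ge0 => ? _]; exact: sqr_ge0.
by rewrite lagrange pmulr_rge0 // subr_ge0.
Qed.

Lemma trmx_mul_self00 p (v : 'cV[R]_p) : (v^T *m v) 0 0 = \sum_i v i 0 ^+ 2.
Proof. by rewrite mxE; apply: eq_bigr => i _; rewrite mxE expr2. Qed.

Lemma gram_entry p q (G : 'M[R]_(p, q)) j k :
  (G^T *m G) j k = \sum_i G i j * G i k.
Proof. by rewrite mxE; apply: eq_bigr => i _; rewrite mxE. Qed.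

Lemma gram_diag_ge0 p q (G : 'M[R]_(p, q)) j : 0 <= (G^T *m G) j j.
Proof. by rewrite gram_entry; apply: sumr_ge0 => i _; rewrite -expr2 sqr_ge0. Qed.

Lemma gram_entry_sqr_le p q (G : 'M[R]_(p, q)) j k :
  (G^T *m G) j k ^+ 2 <= (G^T *m G) j j * (G^T *m G) k k.
Proof. by rewrite !gram_entry; exact: sum_mul_sqr_le. Qed.

Lemma mxtrace_gram p q (G : 'M[R]_(p, q)) :
  \tr (G^T *m G) = \sum_i \sum_k G i k ^+ 2.
Proof.
rewrite /mxtrace exchange_big; apply: eq_bigr => k _.
by rewrite gram_entry; apply: eq_bigr => i _; rewrite expr2.
Qed.

Lemma quad_gram_le_mxtrace p q (G : 'M[R]_(p, q)) (v : 'cV[R]_q) :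
  (v^T *m (G^T *m G) *m v) 0 0 <= \tr (G^T *m G) * (v^T *m v) 0 0.
Proof.
have -> : v^T *m (G^T *m G) *m v = (G *m v)^T *m (G *m v).
  by rewrite trmx_mul !mulmxA.
rewrite !trmx_mul_self00 mxtrace_gram.
rewrite mulr_suml; apply: ler_sum => i _; rewrite mxE; exact: sum_mul_sqr_le.
Qed.

Lemma gram_offdiag_le p q (G : 'M[R]_(p, q)) (c : R) (a : 'I_q -> R) j k :
  0 <= c -> (forall i, (G^T *m G) i i <= c * a i) ->
  `|(G^T *m G) j k| <= c * Num.sqrt (a j * a k).
Proof.
move=> c0 diag_le; set S := G^T *m G.
have Sjj0 := gram_diag_ge0 G j; have Skk0 := gram_diag_ge0 G k.
rewrite -sqrtr_sqr; apply: (le_trans (_ : _ <= Num.sqrt (S j j * S k k))).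
  by rewrite ler_sqrt ?mulr_ge0 //; exact: gram_entry_sqr_le.
have -> : c * Num.sqrt (a j * a k) = Num.sqrt ((c * a j) * (c * a k)).
  have -> : (c * a j) * (c * a k) = c ^+ 2 * (a j * a k) by ring.
  by rewrite (sqrtrM (a j * a k)) ?sqr_ge0 // sqrtr_sqr ger0_norm.
rewrite ler_sqrt; first exact: ler_pM.
by rewrite mulr_ge0 // (le_trans _ (diag_le _)).
Qed.

Lemma invmx_gram p q (F : 'M[R]_(p, q)) : F^T *m F \in unitmx ->
  invmx (F^T *m F) = (F *m invmx (F^T *m F))^T *m (F *m invmx (F^T *m F)).
Proof.
move=> unitFTF; set S := invmx (F^T *m F).
rewrite trmx_mul !mulmxA -(mulmxA S^T F^T F) -(mulmxA S^T) mulmxV // mulmx1.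
by rewrite /S trmx_inv trmx_mul trmxK.
Qed.

Lemma info_mx_gram n m (f : 'I_n -> 'cV[R]_m) (d : 'I_n -> bool) :
  let F := \matrix_(i < n) (if d i then (f i)^T else 0) in
  info_mx f d = F^T *m F.
Proof.
apply/matrixP => a b; rewrite /info_mx summxE !mxE big_mkcond.
apply: eq_bigr => i _; rewrite !mxE; case: (d i); last by rewrite !mxE mul0r.
by rewrite big_ord1 !mxE.
Qed.

Lemma invmx_info_mx_gram n m (f : 'I_n -> 'cV[R]_m) (d : 'I_n -> bool) :
  info_mx f d \in unitmx -> exists G : 'M[R]_(n, m), invmx (info_mx f d) = G^T *m G.
Proof.
rewrite info_mx_gram => unitM; eexists; exact: invmx_gram.
Qed.

Lemma unitvE m (j : 'I_m) : unitv j = delta_mx j 0 :> 'cV[R]_m.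
Proof. by apply/matrixP => a b; rewrite !mxE (ord1 b) andbT. Qed.

Lemma unitv_quad m (j : 'I_m) (A : 'M[R]_m) :
  ((unitv j)^T *m A *m unitv j) 0 0 = A j j.
Proof. by rewrite unitvE trmx_delta -rowE -colE !mxE. Qed.

Lemma vnorm_ge0 p (v : 'cV[R]_p) : 0 <= vnorm v.
Proof. exact: sqrtr_ge0. Qed.

Lemma vnorm_eq0 p (v : 'cV[R]_p) : vnorm v = 0 -> v = 0.
Proof.
move=> /eqP; rewrite sqrtr_eq0 => sum_le0.
have sum0 : \sum_i v i 0 ^+ 2 = 0.
  by apply/eqP; rewrite eq_le sum_le0 sumr_ge0 // => i _; exact: sqr_ge0.
by apply/matrixP => a b; rewrite (ord1 b) mxE (sum_sqr_eq0 sum0).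
Qed.

End Euclidean.

Section MoorePenrose.
Variable R : rcfType.

Lemma is_MP_inverse_rank_factorization p q r (L : 'M[R]_(p, r)) (Rr : 'M[R]_(r, q)) :
  L^T *m L \in unitmx -> Rr *m Rr^T \in unitmx ->
  is_MP_inverse (L *m Rr) (Rr^T *m invmx (Rr *m Rr^T) *m invmx (L^T *m L) *m L^T).
Proof.
move=> unitL unitR.
set X := Rr^T *m invmx (Rr *m Rr^T) *m invmx (L^T *m L) *m L^T.
have AX : L *m Rr *m X = L *m invmx (L^T *m L) *m L^T.
  rewrite /X !mulmxA -(mulmxA L Rr) -(mulmxA L (Rr *m Rr^T)) mulmxV //.
  by rewrite mulmx1.
have XA : X *m (L *m Rr) = Rr^T *m invmx (Rr *m Rr^T) *m Rr.
  rewrite /X !mulmxA -(mulmxA _ L^T L) -(mulmxA _ _ (L^T *m L)) mulVmx //.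
  by rewrite mulmx1.
split.
- by rewrite AX !mulmxA -(mulmxA _ L^T L) -(mulmxA L) mulVmx // mulmx1.
- rewrite XA /X !mulmxA -(mulmxA _ Rr Rr^T) -(mulmxA _ _ (Rr *m Rr^T)) mulVmx //.
  by rewrite mulmx1.
- by rewrite AX !trmx_mul trmxK trmx_inv trmx_mul trmxK mulmxA.
- by rewrite XA !trmx_mul trmxK trmx_inv trmx_mul trmxK mulmxA.
Qed.

Lemma MP_inverse_exists p q (A : 'M[R]_(p, q)) : exists X, is_MP_inverse A X.
Proof.
have unitR : row_base A *m (row_base A)^T \in unitmx.
  exact/row_free_mulmx_trmx_unit/row_base_free.
have unitL : (col_base A)^T *m col_base A \in unitmx.
  rewrite -{2}[col_base A]trmxK row_free_mulmx_trmx_unit //.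
  by rewrite /row_free mxrank_tr; exact: col_base_full.
rewrite -(mulmx_base A); eexists; exact: is_MP_inverse_rank_factorization.
Qed.

Lemma mpinvP p q (A : 'M[R]_(p, q)) : is_MP_inverse A (mpinv A).
Proof. by apply: epsilon_spec; exact: MP_inverse_exists. Qed.

Lemma mulmx_mpinv_factor p q (C : 'M[R]_(p, q)) :
  let N := C *m C^T in N *m mpinv N *m C = C.
Proof.
move=> N; have [NXN _ NXsym _] := mpinvP N.
set P := N *m mpinv N in NXN NXsym *.
apply/eqP; rewrite -subr_eq0; apply/eqP; apply: mulmx_trmx_eq0.
rewrite linearB /= trmx_mul NXsym mulmxBl !mulmxBr !mulmxA.
by rewrite -!(mulmxA _ C C^T) -/N NXN subrr.
Qed.

Lemma mulmx_mpinv_row_free p q (A : 'M[R]_(p, q)) :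
  row_free A -> A *m mpinv A = 1%:M.
Proof.
move=> freeA; have [AXA _ _ _] := mpinvP A.
by rewrite -[LHS]mulmx1 -(mulmxVp freeA) mulmxA AXA.
Qed.

End MoorePenrose.

Section WeightedDesignMatrices.
Variables (R : rcfType) (m K : nat) (s : 'I_K -> nat).
Variable B_ : forall l, 'M[R]_(m, s l).

Lemma mxtrace_le_PhiB (M : 'M[R]_m) l :
  \tr ((B_ l)^T *m invmx M *m B_ l) <= PhiB B_ M.
Proof. by rewrite /PhiB (bigD1 l) //= le_max lexx. Qed.

Lemma PhiB_ge0 (M : 'M[R]_m) : 0 <= PhiB B_ M.
Proof. by rewrite /PhiB; elim/big_rec: _ => // l x _ x0; rewrite le_max x0 orbT. Qed.

Definition Nw_factor (w : 'I_K -> R) : 'M[R]_(m, \sum_l s l) :=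
  \mxrow_l (Num.sqrt (w l) *: B_ l).

Lemma Nw_factorP w : (forall l, 0 <= w l) -> Nw_factor w *m (Nw_factor w)^T = Nw B_ w.
Proof.
move=> w0; rewrite /Nw_factor tr_mxrow mul_mxrow_mxcol; apply: eq_bigr => l _.
by rewrite linearZ /= -scalemxAl -scalemxAr scalerA -expr2 sqr_sqrtr.
Qed.

Lemma mxtrace_Nw_factor_le (S : 'M[R]_m) (a : R) w : in_simplex w ->
  (forall l, \tr ((B_ l)^T *m S *m B_ l) <= a) ->
  \tr ((Nw_factor w)^T *m S *m Nw_factor w) <= a.
Proof.
move=> [w0 w1] trB_le.
rewrite mxtrace_mulC mulmxA Nw_factorP // /Nw mulmx_suml raddf_sum /=.
apply: (le_trans (_ : _ <= \sum_l w l * a)); last by rewrite -mulr_suml w1 mul1r.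
apply: ler_sum => l _; rewrite -scalemxAl mxtraceZ ler_wpM2l //.
by rewrite -mulmxA mxtrace_mulC.
Qed.

Definition uniform_weights : 'I_K -> R := fun=> K%:R^-1.

Lemma Nw_uniform : Nw B_ uniform_weights = K%:R^-1 *: (Bfull B_ *m (Bfull B_)^T).
Proof. by rewrite /Bfull tr_mxrow mul_mxrow_mxcol /Nw scaler_sumr. Qed.

Lemma uniform_in_simplex : (0 < K)%N -> in_simplex uniform_weights.
Proof.
move=> K_gt0; split => [l|]; first by rewrite /uniform_weights invr_ge0 ler0n.
rewrite /uniform_weights sumr_const card_ord -[_ *+ K]mulr_natr mulVf //.
by rewrite pnatr_eq0 -lt0n.
Qed.

Lemma col_Nw_factor_of_submx w (e : 'cV[R]_m) : (forall l, 0 <= w l) ->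
  (e^T <= (Nw B_ w)^T)%MS -> exists y, e = Nw_factor w *m y.
Proof.
move=> w0 /submxP [D eD]; exists ((Nw_factor w)^T *m D^T).
by rewrite mulmxA Nw_factorP // -[e]trmxK eD trmx_mul trmxK.
Qed.

Section WPlus.
Hypothesis Bfree : row_free (Bfull B_).
Variable j : 'I_m.
Let h := mpinv (Bfull B_) *m unitv j.

Lemma Bfull_mpinv_unitv : Bfull B_ *m h = unitv j.
Proof. by rewrite mulmxA mulmx_mpinv_row_free // mul1mx. Qed.

Lemma sum_vnorm_mpinv_unitv_neq0 : \sum_t vnorm (submxcol h t) != 0.
Proof.
apply/eqP => sum0.
have h0 : h = 0.
  rewrite -(submxcolK h); under eq_mxcol => t do
    rewrite (vnorm_eq0 (@psumr_eq0P _ _ _ _ (fun t _ => vnorm_ge0 _) sum0 t isT)).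
  exact: mxcol0.
have := congr1 (fun v : 'cV[R]_m => v j 0) Bfull_mpinv_unitv.
by rewrite h0 mulmx0 !mxE eqxx => /eqP; rewrite eq_sym oner_eq0.
Qed.

Lemma wplus_in_simplex : in_simplex (wplus B_ j).
Proof.
have sum0 := sum_vnorm_mpinv_unitv_neq0.
split => [l|]; first by rewrite divr_ge0 ?sumr_ge0 // => *; exact: vnorm_ge0.
by rewrite /wplus -mulr_suml mulfV.
Qed.

(* e_j = B h = sum_l B_l h_l, and w+_l = 0 forces h_l = 0, so e_j = C y with
   y_l = h_l / sqrt(w+_l). *)
Lemma col_Nw_factor_wplus : exists y, unitv j = Nw_factor (wplus B_ j) *m y.
Proof.
have [w0 _] := wplus_in_simplex; set w := wplus B_ j in w0 *.
exists (\mxcol_l ((Num.sqrt (w l))^-1 *: submxcol h l)).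
rewrite -Bfull_mpinv_unitv /Nw_factor /Bfull mul_mxrow_mxcol.
rewrite -{1}(submxcolK h) mul_mxrow_mxcol; apply: eq_bigr => l _.
rewrite -scalemxAl -scalemxAr scalerA.
have [wl0|wl_neq0] := eqVneq (w l) 0.
  suff -> : submxcol h l = 0 by rewrite !mulmx0 scaler0.
  apply: vnorm_eq0; move/eqP: wl0.
  rewrite /w /wplus mulf_eq0 invr_eq0 (negbTE sum_vnorm_mpinv_unitv_neq0).
  by rewrite orbF => /eqP.
by rewrite mulfV ?scale1r // sqrtr_eq0 -ltNge lt_def wl_neq0 w0.
Qed.

End WPlus.

Section DiagonalBounds.
Variables (n : nat) (G : 'M[R]_(n, m)) (alpha : R).
Hypothesis trB_le : forall l, \tr ((B_ l)^T *m (G^T *m G) *m B_ l) <= alpha.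

Lemma diag_le_Nw_inverse w (X : 'M[R]_m) i : in_simplex w ->
  Nw B_ w *m X *m unitv i = unitv i ->
  (G^T *m G) i i <= alpha * X i i.
Proof.
move=> ws NXe; rewrite -(Nw_factorP ws.1) in NXe.
set C := Nw_factor w in NXe; set e := unitv i in NXe *.
set v := C^T *m X *m e.
have eCv : e = C *m v by rewrite /v !mulmxA -{1}NXe.
have vTv : v^T *m v = e^T *m X *m e.
  have eTXTN : e^T *m X^T *m C *m C^T = e^T.
    by rewrite -{2}NXe !trmx_mul trmxK !mulmxA.
  by rewrite /v !trmx_mul trmxK !mulmxA eTXTN.
have quadC : e^T *m (G^T *m G) *m e = v^T *m ((G *m C)^T *m (G *m C)) *m v.
  by rewrite {1 2}eCv !trmx_mul !mulmxA.
have trC : \tr ((G *m C)^T *m (G *m C)) <= alpha.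
  rewrite trmx_mul -!mulmxA (mulmxA G^T) (mulmxA C^T).
  exact: mxtrace_Nw_factor_le.
rewrite -(unitv_quad i (G^T *m G)) -(unitv_quad i X) -/e quadC -vTv.
apply: le_trans (quad_gram_le_mxtrace _ _) _; apply: ler_wpM2r trC.
by rewrite trmx_mul_self00 sumr_ge0 // => k _; exact: sqr_ge0.
Qed.

Lemma diag_le_BBinv i : (0 < K)%N -> row_free (Bfull B_) ->
  (G^T *m G) i i <= alpha * K%:R * invmx (Bfull B_ *m (Bfull B_)^T) i i.
Proof.
move=> K_gt0 Bfree; rewrite -mulrA; set BB := Bfull B_ *m (Bfull B_)^T.
have NX1 : Nw B_ uniform_weights *m (K%:R *: invmx BB) = 1%:M.
  rewrite Nw_uniform -scalemxAl -scalemxAr scalerA mulVf ?pnatr_eq0 -?lt0n //.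
  by rewrite scale1r mulmxV // row_free_mulmx_trmx_unit.
have -> : K%:R * invmx BB i i = (K%:R *: invmx BB) i i by rewrite mxE.
by apply: diag_le_Nw_inverse (uniform_in_simplex K_gt0) _; rewrite NX1 mul1mx.
Qed.

Lemma diag_le_mpinv_Nw w i : in_simplex w ->
  (exists y, unitv i = Nw_factor w *m y) ->
  (G^T *m G) i i <= alpha * mpinv (Nw B_ w) i i.
Proof.
move=> ws [y ey]; apply: (diag_le_Nw_inverse ws).
by rewrite ey mulmxA -(Nw_factorP ws.1) mulmx_mpinv_factor.
Qed.

End DiagonalBounds.
End WeightedDesignMatrices.

Theorem theorem1 (R : rcfType) (n m N K : nat)
  (hm : (2 <= m)%N) (hmN : (m <= N)%N) (hNn : (N <= n)%N) (hK : (0 < K)%N)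
  (f : 'I_n -> 'cV[R]_m)
  (hspan : row_full (\matrix_(i < n) (f i)^T))
  (s : 'I_K -> nat) (B_ : forall l : 'I_K, 'M[R]_(m, s l))
  (hBrank : \rank (Bfull B_) = m)
  (hBcol : forall (l : 'I_K) (c : 'I_(s l)), col c (B_ l) != 0)
  (d0 : 'I_n -> bool) (hd0 : is_design N d0)
  (hd0inv : info_mx f d0 \in unitmx)
  (alpha : R) (halpha : alpha = PhiB B_ (info_mx f d0))
  (wstar : 'I_m -> 'I_K -> R)
  (hwstar : forall j : 'I_m,
     [/\ in_simplex (wstar j),
         ((unitv j)^T <= (Nw B_ (wstar j))^T)%MS &
         forall w : 'I_K -> R, in_simplex w ->
           ((unitv j)^T <= (Nw B_ w)^T)%MS ->
           mpinv (Nw B_ (wstar j)) j j <= mpinv (Nw B_ w) j j])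
  (dstar : 'I_n -> bool) (hdstar : is_design N dstar)
  (hdstarinv : info_mx f dstar \in unitmx)
  (hopt : forall d : 'I_n -> bool, is_design N d -> info_mx f d \in unitmx ->
     PhiB B_ (info_mx f dstar) <= PhiB B_ (info_mx f d)) :
  let Sigma := invmx (info_mx f dstar) in
  let BBinv := invmx (Bfull B_ *m (Bfull B_)^T) in
  forall j k : 'I_m,
  [/\ `|Sigma j k| <= alpha * K%:R * Num.sqrt (BBinv j j * BBinv k k),
      `|Sigma j k| <= alpha * Num.sqrt (mpinv (Nw B_ (wplus B_ j)) j j
                                        * mpinv (Nw B_ (wplus B_ k)) k k) &
      `|Sigma j k| <= alpha * Num.sqrt (mpinv (Nw B_ (wstar j)) j j
                                        * mpinv (Nw B_ (wstar k)) k k)].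
Proof.
move=> Sigma BBinv j k.
have [G SigmaE] := invmx_info_mx_gram hdstarinv.
have trB_le l : \tr ((B_ l)^T *m (G^T *m G) *m B_ l) <= alpha.
  rewrite -SigmaE halpha; apply: le_trans (hopt d0 hd0 hd0inv).
  exact: mxtrace_le_PhiB.
have alpha_ge0 : 0 <= alpha by rewrite halpha; exact: PhiB_ge0.
have Bfree : row_free (Bfull B_) by rewrite /row_free hBrank.
rewrite /Sigma SigmaE; split.
- apply: (gram_offdiag_le (a := fun i => BBinv i i)) => [|i]; first by rewrite mulr_ge0.
  exact: diag_le_BBinv.
- apply: (gram_offdiag_le (a := fun i => mpinv (Nw B_ (wplus B_ i)) i i)) => // i.
  apply: diag_le_mpinv_Nw => //; first exact: wplus_in_simplex.
  exact: col_Nw_factor_wplus.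
- apply: (gram_offdiag_le (a := fun i => mpinv (Nw B_ (wstar i)) i i)) => // i.
  have [ws sub _] := hwstar i.
  apply: diag_le_mpinv_Nw => //; exact: col_Nw_factor_of_submx ws.1 sub.
Qed.
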